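(* Let $I$ be a finite set of positive integers and $m=\max(I\cup\{0\})$. Then, as polynomials in $n$, $$d(I;n)=\sum_{k=0}^{m} a_k(I)\binom{n-m}{k},$$ where $a_0(I)=0$ and, for $1\le k\le m$, $a_k(I)$ is the number of permutations $\pi\in\mathfrak S_{2m}$ with $\mathrm{Des}\,\pi=I$ such that $\{\pi_1,\dots,\pi_m\}\cap[m+1,2m]=[m+1,m+k]$. Moreover $a_k(I)>0$ for all $1\le k\le m$.
   Context: For integers $a\le b$, $[a,b]=\{a,a+1,\dots,b\}$. For a permutation $\pi=\pi_1\cdots\pi_n$ of $[n]$, $\mathrm{Des}\,\pi=\{i\mid \pi_i>\pi_{i+1}\}$. For $n>m$, $d(I;n)=\#\{\pi\in\mathfrak S_n\mid \mathrm{Des}\,\pi=I\}$; this is a polynomial in $n$ of degree $m$, and the identity is an identity of polynomials (equivalently, it holds for all integers $n>m$). *)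

From HB Require Import structures.
From mathcomp Require Import all_boot all_order all_algebra all_fingroup.
Set Implicit Arguments. Unset Strict Implicit. Unset Printing Implicit Defensive.

(* 0-indexed value of the permutation at 0-indexed position j (0 if j >= n). *)
Definition pval n (s : 'S_n) (j : nat) : nat :=
  match insub j with Some k => val (s k) | None => 0 end.

(* Paper's one-line notation: pi s j = pi_j for 1 <= j <= n, values in [1,n]. *)
Definition pi n (s : 'S_n) (j : nat) : nat := (pval s j.-1).+1.

Definition Des n (s : 'S_n) : seq nat :=
  [seq i <- iota 1 n.-1 | pi s i.+1 < pi s i].

Definition DesEq n (s : 'S_n) (I : seq nat) : bool :=
  all (fun i => i \in I) (Des s) && all (fun i => i \in Des s) I.

Definition d (I : seq nat) (n : nat) : nat := #|[set s : 'S_n | DesEq s I]|.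

Definition maxI (I : seq nat) : nat := \max_(i <- I) i.

Definition a (I : seq nat) (k : nat) : nat :=
  let m := maxI I in
  #|[set s : 'S_(m + m) | DesEq s I &&
      all (fun v => (v \in [seq pi s j | j <- iota 1 m]) == (v \in iota m.+1 k))
          (iota m.+1 m)]|.

From Pilot Require Import Defs.
From HB Require Import structures.
From mathcomp Require Import all_boot all_order all_algebra all_fingroup zify.
Set Implicit Arguments. Unset Strict Implicit. Unset Printing Implicit Defensive.
Import Order.TTheory.

(* Permutations are read as words of letters 0, ..., n - 1.  If every descent lies
   in [1, m], the word increases after its first m letters, so it is determined by
   its prefix p of length m; its descent set is I iff the descents inside p are
   those of I below m and some value smaller than the last letter of p is missing
   from p (the descent at m).  Group the prefixes by the set L of their letters
   >= m: relabelling L increasingly onto [m, m + |L|) preserves this condition and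
   is a bijection onto the prefixes counted by a_|L|(I).  As L ranges over the
   subsets of [m, n) this gives d(I; n) = sum_k a_k(I) C(n - m, k).  A prefix
   without large letters is a permutation of [0, m), so a_0(I) = 0, and shifting
   an explicit word with descent set I below m up by k witnesses a_k(I) > 0. *)

Lemma card_set_count (T : finType) (Q : pred T) : #|[set x | Q x]| = count Q (enum T).
Proof.
rewrite cardsE cardE -size_filter; congr size.
by rewrite /enum_mem -filter_predI; apply: eq_filter => x; rewrite /= andbT.
Qed.

Lemma count_sum (T : Type) (a : pred T) (s : seq T) : count a s = \sum_(x <- s) a x.
Proof. by elim: s => [|x s IH]; rewrite ?big_nil ?big_cons //= IH. Qed.

Lemma count_bij (T1 T2 : eqType) (s : seq T1) (t : seq T2) (P : pred T1) (Q : pred T2)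
    (f : T1 -> T2) (g : T2 -> T1) :
  uniq s -> uniq t ->
  (forall x, x \in s -> P x -> [/\ f x \in t, Q (f x) & g (f x) = x]) ->
  (forall y, y \in t -> Q y -> [/\ g y \in s, P (g y) & f (g y) = y]) ->
  count P s = count Q t.
Proof.
move=> us ut fP gQ; rewrite -!size_filter -(size_map f).
apply: perm_size; apply: uniq_perm.
- rewrite map_inj_in_uniq ?filter_uniq // => x y.
  rewrite !mem_filter => /andP[Px xs] /andP[Py ys] e.
  by have [_ _ <-] := fP _ xs Px; have [_ _ <-] := fP _ ys Py; rewrite e.
- exact: filter_uniq.
move=> y; apply/idP/idP.
- case/mapP=> x; rewrite mem_filter => /andP[Px xs] ->.
  by have [ft Qf _] := fP _ xs Px; rewrite mem_filter Qf ft.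
rewrite mem_filter => /andP[Qy yt]; have [gs Pg fg] := gQ _ yt Qy.
by apply/mapP; exists (g y); rewrite ?fg // mem_filter Pg gs.
Qed.

Fixpoint subseqs (T : Type) (s : seq T) : seq (seq T) :=
  if s is x :: s' then [seq x :: t | t <- subseqs s'] ++ subseqs s' else [:: [::]].

Section Subseqs.
Variable T : eqType.

Lemma nil_mem_subseqs (s : seq T) : [::] \in subseqs s.
Proof. by elim: s => [|x s IH] //=; rewrite mem_cat IH orbT. Qed.

Lemma mem_subseqs (s t : seq T) : (t \in subseqs s) = subseq t s.
Proof.
elim: s t => [|x s IH] t /=; first by rewrite inE; case: t.
rewrite mem_cat; case: t => [|y t]; first by rewrite nil_mem_subseqs orbT.
case: ifP => [/eqP ->|nyx].
- apply/orP/idP => [[/mapP[t' Ht' [->]]|]|]; first by rewrite -IH.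
  + by rewrite IH => /(subseq_trans _); apply; exact: subseq_cons.
  + by rewrite -IH => H; left; apply/mapP; exists t.
- rewrite IH; apply/orP/idP => [[/mapP[t' _ [e]]|//]|]; last by right.
  by rewrite e eqxx in nyx.
Qed.

Lemma subseqs_uniq (s : seq T) : uniq s -> uniq (subseqs s).
Proof.
elim: s => [|x s IH] //= /andP[xs us]; rewrite cat_uniq IH // andbT.
rewrite map_inj_uniq ?IH //=; last by move=> t1 t2 [].
apply/hasPn => t /= ts; apply/mapP => [[t' _ e]]; move: ts.
by rewrite e mem_subseqs => /mem_subseq H; rewrite H ?inE ?eqxx in xs.
Qed.

Lemma count_size_subseqs (s : seq T) k :
  count (fun t => size t == k) (subseqs s) = 'C(size s, k).
Proof.
elim: s k => [|x s IH] k /=; first by rewrite bin0n; case: k.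
rewrite count_cat count_map; case: k => [|k].
  rewrite bin0 (_ : count _ _ = 0) ?add0n ?IH ?bin0 //.
  by apply/eqP; rewrite -leqn0 leqNgt -has_count; apply/hasPn.
rewrite binS addnC; congr (_ + _); last exact: IH.
by rewrite -IH; apply: eq_count.
Qed.

End Subseqs.

Section PermWords.
Variable n : nat.

Definition word (s : 'S_n) : seq nat := mkseq (Defs.pval s) n.
Definition perm_words : seq (seq nat) := permutations (iota 0 n).

Lemma pvalE (s : 'S_n) (i : 'I_n) : Defs.pval s i = val (s i).
Proof. by rewrite /Defs.pval; case: insubP => [k _ /val_inj -> //|]; rewrite ltn_ord. Qed.

Lemma pval_word (s : 'S_n) j : Defs.pval s j = nth 0 (word s) j.
Proof.
case: (ltnP j n) => hj; first by rewrite nth_mkseq.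
rewrite nth_default ?size_mkseq // /Defs.pval.
by case: insubP => [k hk _|//]; rewrite ltnNge hj in hk.
Qed.

Lemma word_perm_words (s : 'S_n) : word s \in perm_words.
Proof.
rewrite mem_permutations; have uw : uniq (word s).
  rewrite /word /mkseq map_inj_in_uniq ?iota_uniq // => x y.
  rewrite !mem_iota !add0n => hx hy.
  rewrite -[x]/(val (Ordinal hx)) -[y]/(val (Ordinal hy)) !pvalE => /val_inj/perm_inj.
  by case.
have sub : {subset word s <= iota 0 n}.
  move=> x /mapP[j]; rewrite mem_iota add0n => /= hj ->.
  by rewrite mem_iota add0n -[j]/(val (Ordinal hj)) pvalE ltn_ord.
apply: uniq_perm => //; first exact: iota_uniq.
have hs : size (iota 0 n) <= size (word s) by rewrite size_iota size_mkseq.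
by have [_ e] := uniq_min_size uw sub hs.
Qed.

Lemma word_inj : injective word.
Proof. by move=> s t e; apply/permP => i; apply/val_inj; rewrite -!pvalE !pval_word e. Qed.

Lemma card_perm_words (Q : pred 'S_n) (P : pred (seq nat)) :
  (forall s, Q s = P (word s)) -> #|[set s | Q s]| = count P perm_words.
Proof.
move=> QP; rewrite card_set_count (eq_count QP) -(count_map word P).
have uw : uniq (map word (enum 'S_n)) by rewrite map_inj_uniq ?enum_uniq //; exact: word_inj.
have sub : {subset map word (enum 'S_n) <= perm_words}.
  by move=> w /mapP[s _ ->]; exact: word_perm_words.
have hs : size perm_words <= size (map word (enum 'S_n)).
  by rewrite size_map -cardE card_Sn size_permutations ?iota_uniq ?size_iota.
have [_ e] := uniq_min_size uw sub hs.
by rewrite (seq.permP (uniq_perm uw (permutations_uniq _) e)).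
Qed.

End PermWords.

Section DescentClass.
Variables (I : seq nat) (m : nat).
Hypothesis m_in_I : m \in I.
Hypothesis I_bounded : forall i, i \in I -> 0 < i <= m.

Let m_gt0 : 0 < m. Proof. by case/andP: (I_bounded m_in_I). Qed.

Let maxIE : maxI I = m.
Proof.
apply/eqP; rewrite eqn_leq (leq_bigmax_seq m m_in_I) // andbT.
by apply/bigmax_leqP_seq => i /I_bounded /andP[].
Qed.

(* Positions are 0-indexed: this is the paper's descent at position j. *)
Definition descent (w : seq nat) j := nth 0 w j < nth 0 w j.-1.

Definition desI (w : seq nat) :=
  let D := [seq i <- iota 1 (size w).-1 | descent w i] in
  all (fun i => i \in I) D && all (fun i => i \in D) I.

Lemma DesEq_word n (s : 'S_n) : DesEq s I = desI (word s).
Proof.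
rewrite /DesEq /desI /Des size_mkseq.
have -> : [seq i <- iota 1 n.-1 | Defs.pi s i.+1 < Defs.pi s i] =
          [seq i <- iota 1 n.-1 | descent (word s) i].
  by apply: eq_filter => i; rewrite /Defs.pi /descent /= ltnS !pval_word.
by [].
Qed.

Lemma desIE w : m < size w ->
  desI w = all (fun j => descent w j == (j \in I)) (iota 1 (size w).-1).
Proof.
move=> hw; rewrite /desI; apply/andP/idP.
- case=> DI ID; apply/allP => j hj; apply/eqP; case dj: (descent w j).
  + by apply/esym/(allP DI); rewrite mem_filter dj.
  + by apply/esym/negbTE/negP => /(allP ID); rewrite mem_filter dj.
- move=> H; split; apply/allP => j.
  + by rewrite mem_filter => /andP[dj /(allP H)]; rewrite dj => /eqP <-.
  + move=> jI; have hj : j \in iota 1 (size w).-1.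
      by rewrite mem_iota; have := I_bounded jI; lia.
    by rewrite mem_filter hj andbT; have := allP H _ hj; rewrite jI => /eqP.
Qed.

Definition compl n (p : seq nat) := [seq x <- iota 0 n | x \notin p].
Definition prefixes n := undup [seq take m w | w <- perm_words n].

Lemma perm_cat_compl n p : uniq p -> all (fun x => x < n) p ->
  perm_eq (p ++ compl n p) (iota 0 n).
Proof.
move=> up ap; apply: uniq_perm.
- rewrite cat_uniq up filter_uniq ?iota_uniq // andbT.
  by apply/hasPn => x; rewrite mem_filter => /andP[].
- exact: iota_uniq.
move=> x; rewrite mem_cat mem_filter mem_iota add0n leq0n /=.
by case xp: (x \in p) => //=; rewrite (allP ap x xp).
Qed.

Lemma mem_prefixes n p : m <= n ->
  (p \in prefixes n) = [&& uniq p, size p == m & all (fun x => x < n) p].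
Proof.
move=> hmn; rewrite mem_undup; apply/mapP/idP.
- case=> w; rewrite mem_permutations => pw ->.
  have sw : size w = n by rewrite (perm_size pw) size_iota.
  have uw : uniq w by rewrite (perm_uniq pw) iota_uniq.
  rewrite take_uniq // size_takel ?sw // eqxx /=.
  by apply/allP => x /mem_take; rewrite (perm_mem pw) mem_iota.
- case/and3P => up /eqP sp ap; exists (p ++ compl n p).
    by rewrite mem_permutations perm_cat_compl.
  by rewrite take_size_cat.
Qed.

Lemma take_cat_compl n w : m < n -> w \in perm_words n -> desI w ->
  take m w ++ compl n (take m w) = w.
Proof.
rewrite mem_permutations => hmn pw Dw.
have sw : size w = n by rewrite (perm_size pw) size_iota.
have uw : uniq w by rewrite (perm_uniq pw) iota_uniq.
rewrite desIE ?sw // in Dw.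
rewrite -[in RHS](cat_take_drop m w); congr (_ ++ _).
apply: (irr_sorted_eq ltn_trans ltnn).
- exact: (sorted_filter ltn_trans _ (iota_ltn_sorted 0 n)).
- apply/(sortedP 0) => i; rewrite size_drop sw => hi; rewrite !nth_drop.
  have hj : m + i.+1 \in iota 1 n.-1 by rewrite mem_iota; lia.
  have jI : (m + i.+1 \in I) = false by apply/negbTE/negP => /I_bounded; lia.
  have := allP Dw _ hj; rewrite jI /descent addnS /= => /eqP/negbT.
  rewrite -leqNgt => hle.
  have hne : nth 0 w (m + i) != nth 0 w (m + i).+1 by rewrite nth_uniq ?sw //; lia.
  by rewrite ltn_neqAle hne hle.
- move=> x; rewrite mem_filter mem_iota add0n /=.
  have := uw; rewrite -{1}(cat_take_drop m w) cat_uniq => /and3P[_ hd _].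
  have xw : (x < n) = (x \in take m w) || (x \in drop m w).
    by rewrite -mem_cat cat_take_drop (perm_mem pw) mem_iota.
  case xd: (x \in drop m w).
  + have xt : x \notin take m w by apply: (hasPn hd).
    by rewrite xt xw xd orbT.
  + by apply/negbTE/andP => [[xt]]; rewrite xw xd orbF (negbTE xt).
Qed.

Lemma count_perm_words_prefixes n (P : pred (seq nat)) : m < n ->
  (forall w, P w -> desI w) ->
  count P (perm_words n) = count (fun p => P (p ++ compl n p)) (prefixes n).
Proof.
move=> hmn PD.
apply: (count_bij (f := take m) (g := fun p => p ++ compl n p));
  [exact: permutations_uniq | exact: undup_uniq | |].
- move=> w ww Pw; rewrite take_cat_compl ?PD //; split => //.
  by rewrite mem_undup; apply/mapP; exists w.
- move=> p; rewrite mem_prefixes ?(ltnW hmn) // => /and3P[up /eqP sp ap] Pp.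
  by rewrite mem_permutations perm_cat_compl // take_size_cat.
Qed.

(* The second conjunct is the descent at position m of p ++ compl n p: some value
   below the last letter of p is missing from p, hence starts the increasing tail. *)
Definition desI_prefix (p : seq nat) :=
  all (fun j => descent p j == (j \in I)) (iota 1 m.-1) &&
  has (fun v => v \notin p) (iota 0 (nth 0 p m.-1)).

Lemma desI_cat_compl n p : m < n -> uniq p -> size p = m -> all (fun x => x < n) p ->
  desI (p ++ compl n p) = desI_prefix p.
Proof.
move=> hmn up sp ap.
have sc : size (compl n p) = n - m.
  by have := perm_size (perm_cat_compl up ap); rewrite size_cat size_iota sp; lia.
have sw : size (p ++ compl n p) = n by rewrite size_cat sp sc; lia.
have sorted_c : sorted ltn (compl n p).
  exact: (sorted_filter ltn_trans _ (iota_ltn_sorted 0 n)).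
rewrite desIE sw; last by lia.
have -> : n.-1 = m.-1 + (1 + (n - m).-1) by lia.
rewrite iotaD iotaD !all_cat (_ : 1 + m.-1 = m); last by lia.
have head_des : all (fun j => descent (p ++ compl n p) j == (j \in I)) (iota 1 m.-1) =
                all (fun j => descent p j == (j \in I)) (iota 1 m.-1).
  apply: eq_in_all => j; rewrite mem_iota => hj.
  have a1 : j < m by lia.
  have a2 : j.-1 < m by lia.
  by rewrite /descent !nth_cat sp a1 a2.
have tail_des :
    all (fun j => descent (p ++ compl n p) j == (j \in I)) (iota (m + 1) (n - m).-1).
  apply/allP => j; rewrite mem_iota => hj.
  have jI : (j \in I) = false by apply/negbTE/negP => /I_bounded; lia.
  have a1 : (j < m) = false by apply/negbTE; rewrite -leqNgt; lia.
  have a2 : (j.-1 < m) = false by apply/negbTE; rewrite -leqNgt; lia.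
  rewrite jI /descent !nth_cat sp a1 a2 eqbF_neg -leqNgt ltnW //.
  by apply: (sorted_ltn_nth ltn_trans 0 sorted_c); rewrite ?inE ?sc; lia.
rewrite head_des tail_des andbT /= andbT m_in_I eqb_id /desI_prefix; congr (_ && _).
have a1 : m.-1 < m by lia.
rewrite /descent nth_cat sp ltnn subnn nth_cat sp a1.
apply/idP/hasP.
- move=> H; exists (nth 0 (compl n p) 0); first by rewrite mem_iota.
  have : nth 0 (compl n p) 0 \in compl n p by rewrite mem_nth // sc; lia.
  by rewrite mem_filter => /andP[].
- case=> v; rewrite mem_iota add0n leq0n /= => hv vp.
  have vc : v \in compl n p.
    rewrite mem_filter vp mem_iota add0n leq0n /=.
    by apply: (ltn_trans hv); apply: (allP ap); rewrite mem_nth // sp; lia.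
  apply: (leq_trans _ hv); rewrite ltnS -[X in _ <= X](nth_index 0 vc).
  apply: (sorted_leq_nth leq_trans leqnn 0 _); rewrite ?inE ?index_mem //.
    exact: (sorted_filter leq_trans _ (iota_sorted 0 n)).
  by rewrite sc; lia.
Qed.

Lemma has_notin_small q x : uniq q -> size q = m -> x \in q -> m <= x ->
  has (fun v => v \notin q) (iota 0 m).
Proof.
move=> uq sq xq hx; case: (boolP (has _ _)) => // /hasPn notin.
have sub : {subset iota 0 m <= q} by move=> v /notin; rewrite negbK.
have hs : size q <= size (iota 0 m) by rewrite sq size_iota.
have [_ e] := uniq_min_size (iota_uniq 0 m) sub hs.
by move: xq; rewrite -e mem_iota; lia.
Qed.

Lemma mem_small_full q v : uniq q -> size q = m -> all (fun x => x < m) q ->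
  v < m -> v \in q.
Proof.
move=> uq sq aq hv.
have sub : {subset q <= iota 0 m} by move=> x /(allP aq); rewrite mem_iota.
have hs : size (iota 0 m) <= size q by rewrite sq size_iota.
have [_ e] := uniq_min_size uq sub hs.
by rewrite e mem_iota.
Qed.

Lemma desI_prefix_relabel p f : uniq p -> size p = m ->
  {in p, forall x, x < m -> f x = x} -> {in p, forall x, m <= x -> m <= f x} ->
  {in p &, {mono f : x y / x < y}} -> desI_prefix (map f p) = desI_prefix p.
Proof.
move=> up sp f_small f_large f_mono.
have f_inj : {in p &, injective f}.
  move=> x y xp yp e; case: (ltngtP x y) => // h.
    by have := f_mono x y xp yp; rewrite h e ltnn.
  by have := f_mono y x yp xp; rewrite h e ltnn.
have uq : uniq (map f p) by rewrite map_inj_in_uniq.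
have sq : size (map f p) = m by rewrite size_map.
have mem_small v : v < m -> (v \in map f p) = (v \in p).
  move=> hv; apply/mapP/idP => [[y yp e]|vp]; last by exists v; rewrite // f_small.
  case: (ltnP y m) => hy; first by rewrite e f_small.
  by have := f_large _ yp hy; lia.
have nth_f j : j < m -> nth 0 (map f p) j = f (nth 0 p j).
  by move=> hj; rewrite (nth_map 0) // sp.
have mem_nth_p j : j < m -> nth 0 p j \in p by move=> hj; rewrite mem_nth // sp.
have missing_below q y : uniq q -> size q = m -> y \in q -> m <= y ->
    has (fun v => v \notin q) (iota 0 y).
  move=> uq' sq' yq hy; have /hasP[v] := has_notin_small uq' sq' yq hy.
  by rewrite mem_iota => hv vq; apply/hasP; exists v => //; rewrite mem_iota; lia.
rewrite /desI_prefix; congr (_ && _).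
- apply: eq_in_all => j; rewrite mem_iota => hj.
  have a1 : j < m by lia.
  have a2 : j.-1 < m by lia.
  by rewrite /descent !nth_f // f_mono // mem_nth_p.
- have hl : m.-1 < m by lia.
  rewrite nth_f //; have := mem_nth_p _ hl; set x := nth 0 p m.-1 => xp.
  case: (ltnP x m) => hx.
  + rewrite f_small //; apply: eq_in_has => v; rewrite mem_iota => hv.
    by rewrite mem_small //; lia.
  + have hfx := f_large _ xp hx.
    by rewrite (missing_below _ _ uq sq) ?(missing_below _ _ up sp) //; apply/mapP; exists x.
Qed.

Definition large_letters n (p L : seq nat) :=
  all (fun u => (u \in p) == (u \in L)) (iota m (n - m)).

Lemma large_lettersP n p L : large_letters n p L ->
  all (fun x => x < n) p -> all (fun x => x < n) L ->
  forall u, m <= u -> (u \in p) = (u \in L).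
Proof.
move=> H ap aL u hu; case: (ltnP u n) => hn.
  by apply/eqP; apply: (allP H); rewrite mem_iota; lia.
by apply/idP/idP => [/(allP ap)|/(allP aL)]; lia.
Qed.

Lemma large_letters_intro n p L :
  (forall u, m <= u -> (u \in p) = (u \in L)) -> large_letters n p L.
Proof. by move=> H; apply/allP => u; rewrite mem_iota => /andP[hu _]; rewrite H. Qed.

Definition a_prefix k :=
  count (fun p => desI_prefix p && large_letters (m + m) p (iota m k)) (prefixes (m + m)).

Definition compress (L : seq nat) x := if x < m then x else m + index x L.
Definition expand (L : seq nat) y := if y < m then y else nth 0 L (y - m).

Section Standardize.
Variables (n : nat) (L : seq nat).
Hypothesis m_lt_n : m < n.
Hypothesis L_sub : subseq L (iota m (n - m)).

Let L_uniq : uniq L := subseq_uniq L_sub (iota_uniq _ _).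
Let L_sorted : sorted ltn L := subseq_sorted ltn_trans L_sub (iota_ltn_sorted _ _).

Let L_ge u : u \in L -> m <= u.
Proof. by move/(mem_subseq L_sub); rewrite mem_iota => /andP[]. Qed.

Let L_lt u : u \in L -> u < n.
Proof. by move/(mem_subseq L_sub); rewrite mem_iota => /andP[_]; rewrite subnKC // ltnW. Qed.

Let L_all : all (fun x => x < n) L. Proof. by apply/allP => u /L_lt. Qed.

Lemma count_large_letters_oversize : m < size L ->
  count (fun p => desI_prefix p && large_letters n p L) (prefixes n) = 0.
Proof.
move=> hk; apply/eqP; rewrite -leqn0 leqNgt -has_count; apply/hasPn => p.
rewrite mem_prefixes ?(ltnW m_lt_n) // => /and3P[up /eqP sp ap]; apply/negP => /andP[_ hL].
have sub : {subset L <= p} by move=> u uL; rewrite (large_lettersP hL ap L_all (L_ge uL)).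
by have := uniq_leq_size L_uniq sub; rewrite sp leqNgt hk.
Qed.

Hypothesis L_small : size L <= m.

Let iota_all : all (fun x => x < m + m) (iota m (size L)).
Proof. by apply/allP => u; rewrite mem_iota => /andP[_ h]; apply: leq_trans h _; rewrite leq_add2l. Qed.

Lemma compress_prefix p : p \in prefixes n ->
    desI_prefix p && large_letters n p L ->
  [/\ map (compress L) p \in prefixes (m + m),
      desI_prefix (map (compress L) p) &&
        large_letters (m + m) (map (compress L) p) (iota m (size L))
    & map (expand L) (map (compress L) p) = p].
Proof.
rewrite mem_prefixes ?(ltnW m_lt_n) // => /and3P[up /eqP sp ap] /andP[Dp hL].
have pL := large_lettersP hL ap L_all.
have index_lt x : x \in p -> m <= x -> index x L < size L.
  by move=> xp hx; rewrite index_mem -pL.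
have expandK : {in p, cancel (compress L) (expand L)}.
  move=> x xp; rewrite /compress /expand; case: (ltnP x m) => hx; first by rewrite hx.
  by rewrite ltnNge leq_addr /= addKn nth_index // -pL.
have mono : {in p &, {mono compress L : x y / x < y}}.
  move=> x y xp yp; rewrite /compress; case: (ltnP x m) => hx; case: (ltnP y m) => hy //.
  + by rewrite ltn_addr // (leq_trans hx hy).
  + by rewrite !ltnNge (leq_trans (ltnW hy) (leq_addr _ _)) // (leq_trans (ltnW hy) hx).
  + by rewrite ltn_add2l -(lt_sorted_ltn_nth 0 L_sorted) ?inE ?index_mem ?nth_index -?pL.
split.
- rewrite mem_prefixes ?leq_addr // (map_inj_in_uniq (can_in_inj expandK)) up.
  rewrite size_map sp eqxx /=; apply/allP => _ /mapP[x xp ->].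
  rewrite /compress; case: (ltnP x m) => hx; first exact: ltn_addr.
  by rewrite ltn_add2l (leq_trans (index_lt x xp hx)).
- rewrite desI_prefix_relabel //; first last.
  + by move=> x _ hx; rewrite /compress ltnNge hx /= leq_addr.
  + by move=> x _ hx; rewrite /compress hx.
  rewrite Dp /=; apply: large_letters_intro => u hu; apply/mapP/idP.
  + case=> x xp eu; move: hu; rewrite eu /compress mem_iota.
    case: (ltnP x m) => hx hu; first by move: hu; rewrite leqNgt hx.
    by rewrite leq_addr ltn_add2l index_lt.
  + rewrite mem_iota => hu2.
    have hu3 : u - m < size L by case/andP: hu2 => h1 h2; rewrite ltn_subLR.
    exists (nth 0 L (u - m)); first by rewrite pL ?L_ge ?mem_nth.
    by rewrite /compress ltnNge L_ge ?mem_nth //= index_uniq // subnKC //; case/andP: hu2.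
- by rewrite -map_comp map_id_in.
Qed.

Lemma expand_prefix q : q \in prefixes (m + m) ->
    desI_prefix q && large_letters (m + m) q (iota m (size L)) ->
  [/\ map (expand L) q \in prefixes n,
      desI_prefix (map (expand L) q) && large_letters n (map (expand L) q) L
    & map (compress L) (map (expand L) q) = q].
Proof.
rewrite mem_prefixes ?leq_addr // => /and3P[uq /eqP sq aq] /andP[Dq hL].
have qL := large_lettersP hL aq iota_all.
have sub_lt y : y \in q -> m <= y -> y - m < size L.
  by move=> yq hy; move: (yq); rewrite qL // mem_iota => /andP[_ h]; rewrite ltn_subLR.
have nth_in y : y \in q -> m <= y -> nth 0 L (y - m) \in L.
  by move=> yq hy; rewrite mem_nth // sub_lt.
have compressK : {in q, cancel (expand L) (compress L)}.
  move=> y yq; rewrite /compress /expand; case: (ltnP y m) => hy; first by rewrite hy.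
  by rewrite ltnNge L_ge ?nth_in //= index_uniq ?sub_lt // subnKC.
have mono : {in q &, {mono expand L : x y / x < y}}.
  move=> x y xq yq; rewrite /expand; case: (ltnP x m) => hx; case: (ltnP y m) => hy //.
  + have h := L_ge (nth_in y yq hy); by rewrite (leq_trans hx h) (leq_trans hx hy).
  + have h := L_ge (nth_in x xq hx).
    by rewrite !ltnNge (leq_trans (ltnW hy) h) (leq_trans (ltnW hy) hx).
  + by rewrite -(ltn_sub2rE y hx); apply: (lt_sorted_ltn_nth 0 L_sorted); rewrite inE sub_lt.
split.
- rewrite mem_prefixes ?(ltnW m_lt_n) // (map_inj_in_uniq (can_in_inj compressK)) uq.
  rewrite size_map sq eqxx /=; apply/allP => _ /mapP[y yq ->].
  rewrite /expand; case: (ltnP y m) => hy; first exact: ltn_trans hy m_lt_n.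
  exact: L_lt (nth_in y yq hy).
- rewrite desI_prefix_relabel //; first last.
  + by move=> x xq hx; rewrite /expand ltnNge hx /= L_ge ?nth_in.
  + by move=> x _ hx; rewrite /expand hx.
  rewrite Dq /=; apply: large_letters_intro => u hu; apply/mapP/idP.
  + case=> y yq eu; move: hu; rewrite eu /expand.
    case: (ltnP y m) => hy hu; first by move: hu; rewrite leqNgt hy.
    exact: nth_in.
  + move=> uL; exists (m + index u L).
      by rewrite qL ?leq_addr // mem_iota leq_addr /= ltn_add2l index_mem.
    by rewrite /expand ltnNge leq_addr /= addKn nth_index.
- by rewrite -map_comp map_id_in.
Qed.

End Standardize.

Lemma count_large_letters n L : m < n -> subseq L (iota m (n - m)) ->
  count (fun p => desI_prefix p && large_letters n p L) (prefixes n) =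
  if size L <= m then a_prefix (size L) else 0.
Proof.
move=> hmn sub; case: leqP => hk; last exact: count_large_letters_oversize.
apply: (count_bij (f := map (compress L)) (g := map (expand L)));
  [exact: undup_uniq | exact: undup_uniq | |].
- by move=> p; apply: compress_prefix.
- by move=> q; apply: expand_prefix.
Qed.

Lemma count_by_large_letters n (P : pred (seq nat)) : m < n ->
  count P (prefixes n) =
  \sum_(L <- subseqs (iota m (n - m))) count (fun p => P p && large_letters n p L) (prefixes n).
Proof.
move=> hmn; set S := iota m (n - m).
rewrite count_sum [RHS](eq_bigr (fun L => \sum_(p <- prefixes n) (P p && large_letters n p L)));
  last by move=> L _; rewrite count_sum.
rewrite exchange_big /= big_seq [RHS]big_seq; apply: eq_bigr => p.
rewrite mem_prefixes ?(ltnW hmn) // => /and3P[up /eqP sp ap].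
case: (P p) => /=; last by rewrite big1.
rewrite -(count_sum (fun L => large_letters n p L)).
set L0 := [seq u <- S | u \in p].
have L0S : L0 \in subseqs S by rewrite mem_subseqs filter_subseq.
have uS : uniq S by exact: iota_uniq.
rewrite (@eq_in_count _ _ (pred1 L0)) ?count_uniq_mem ?subseqs_uniq ?L0S //.
move=> L; rewrite mem_subseqs => LS /=; apply/idP/eqP => [H|->].
- move/(subseq_uniqP uS): LS => ->; apply: eq_in_filter => u uS'.
  by rewrite (eqP (allP H u uS')).
- by apply/allP => u uS'; rewrite /L0 mem_filter uS' andbT.
Qed.

Lemma sum_subseqs_by_size (S : seq nat) (F : nat -> nat) :
  \sum_(L <- subseqs S) (if size L <= m then F (size L) else 0) =
  \sum_(k < m.+1) F k * 'C(size S, k).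
Proof.
transitivity (\sum_(L <- subseqs S) \sum_(k < m.+1) (size L == k) * F k).
  apply: eq_bigr => L _; case: leqP => h.
    rewrite (bigD1 (Ordinal (h : size L < m.+1))) //= eqxx mul1n big1 ?addn0 // => k hk.
    by have /negbTE -> : size L != k by apply: contra hk => /eqP e; apply/eqP/val_inj.
  rewrite big1 // => k _.
  by have /negbTE -> : size L != k by rewrite neq_ltn (leq_trans (ltn_ord k) h) orbT.
rewrite exchange_big; apply: eq_bigr => k _.
by rewrite -big_distrl /= -(count_sum (fun L => size L == k)) count_size_subseqs mulnC.
Qed.

Lemma a_eq_prefix k : a I k = a_prefix k.
Proof.
rewrite /a maxIE (@card_perm_words _ _ (fun w => desI w &&
  all (fun v => (v \in [seq (nth 0 w j.-1).+1 | j <- iota 1 m]) == (v \in iota m.+1 k))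
      (iota m.+1 m))); last first.
  move=> s; rewrite DesEq_word.
  have -> : [seq Defs.pi s j | j <- iota 1 m] = [seq (nth 0 (word s) j.-1).+1 | j <- iota 1 m].
    by apply: eq_map => j; rewrite /Defs.pi pval_word.
  by [].
have hmm : m < m + m by rewrite -{1}(addn0 m) ltn_add2l.
rewrite (count_perm_words_prefixes hmm); last by move=> w /andP[].
apply: eq_in_count => p; rewrite mem_prefixes ?leq_addr // => /and3P[up /eqP sp ap] /=.
rewrite desI_cat_compl //; congr (_ && _); rewrite /large_letters addKn.
have first_letters : [seq (nth 0 (p ++ compl (m + m) p) j.-1).+1 | j <- iota 1 m] =
    map succn p.
  rewrite (iotaDl 1 0) -map_comp -[in RHS](mkseq_nth 0 p) sp /mkseq -map_comp.
  apply/eq_in_map => j; rewrite mem_iota add0n => /andP[_ hj] /=.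
  by rewrite add0n nth_cat sp hj.
rewrite first_letters (iotaDl 1 m m) all_map; apply: eq_all => u /=.
by rewrite (mem_map succn_inj) !mem_iota ltnS addSn ltnS.
Qed.

Lemma a_prefix0 : a_prefix 0 = 0.
Proof.
apply/eqP; rewrite -leqn0 leqNgt -has_count; apply/hasPn => p.
rewrite mem_prefixes ?leq_addr // => /and3P[up /eqP sp ap].
apply/negP => /andP[/andP[_ /hasP[v]]]; rewrite mem_iota add0n leq0n /= => hv vp hL.
have small : all (fun x => x < m) p.
  apply/allP => x xp; rewrite ltnNge; apply/negP => hx.
  by have := large_lettersP hL ap isT hx; rewrite xp.
have last_small : nth 0 p m.-1 < m by apply: (allP small); rewrite mem_nth // sp prednK.
by rewrite (mem_small_full up sp small (ltn_trans hv last_small)) in vp.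
Qed.

(* Each new letter is a new minimum 0, after shifting the earlier letters up, at a
   descent of I, and a new maximum otherwise. *)
Fixpoint staircase t :=
  if t is t'.+1 then
    if (t' \in I) && (0 < t') then rcons (map succn (staircase t')) 0
    else rcons (staircase t') t'
  else [::].

Lemma staircase_spec t :
  [/\ size (staircase t) = t, uniq (staircase t), all (fun x => x < t) (staircase t) &
      forall j, 0 < j < t -> descent (staircase t) j = (j \in I)].
Proof.
elim: t => [|t [s1 u1 a1 d1]] /=; first by split => // j; rewrite ltn0 andbF.
case: ifP => hc; split.
- by rewrite size_rcons size_map s1.
- rewrite rcons_uniq map_inj_uniq ?u1 ?andbT //; last exact: succn_inj.
  by apply/mapP => [[x _]].
- rewrite all_rcons /=; apply/allP => _ /mapP[x xs ->]; rewrite ltnS; exact: (allP a1 _ xs).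
- move=> j hj; rewrite /descent !nth_rcons size_map s1.
  have [jt|jt|ej] := ltngtP j t.
  + have j1 : j.-1 < t by apply: leq_ltn_trans (leq_pred j) jt.
    by rewrite j1 !(nth_map 0) ?s1 // ltnS; apply: d1; case/andP: hj => -> _.
  + by case/andP: hj => _; rewrite ltnS leqNgt jt.
  + rewrite ej ?ltnn ?eqxx.
    have j1 : t.-1 < t by rewrite prednK // -ej; case/andP: hj.
    by rewrite j1 (nth_map 0) ?s1 //; case/andP: hc => ->.
- by rewrite size_rcons s1.
- by rewrite rcons_uniq u1 andbT; apply/negP => /(allP a1); rewrite ltnn.
- by rewrite all_rcons ltnSn /=; apply/allP => x /(allP a1) /ltnW.
- move=> j hj; rewrite /descent !nth_rcons s1.
  have [jt|jt|ej] := ltngtP j t.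
  + have j1 : j.-1 < t by apply: leq_ltn_trans (leq_pred j) jt.
    by rewrite j1; apply: d1; case/andP: hj => -> _.
  + by case/andP: hj => _; rewrite ltnS leqNgt jt.
  + rewrite ej ?ltnn ?eqxx.
    have t0 : 0 < t by rewrite -ej; case/andP: hj.
    have j1 : t.-1 < t by rewrite prednK.
    rewrite j1; rewrite t0 andbT in hc; rewrite hc.
    apply/negbTE; rewrite -leqNgt ltnW //; apply: (allP a1); by rewrite mem_nth ?s1.
Qed.

(* Shifting the staircase up by k frees the values [0, k) and makes
   [m, m + k) its large letters. *)
Lemma a_prefix_gt0 k : 0 < k <= m -> 0 < a_prefix k.
Proof.
case/andP => k0 km; have [s1 u1 a1 d1] := staircase_spec m.
have sub : {subset staircase m <= iota 0 m} by move=> x /(allP a1); rewrite mem_iota.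
have hs : size (iota 0 m) <= size (staircase m) by rewrite size_iota s1.
have [_ values] := uniq_min_size u1 sub hs.
rewrite /a_prefix -has_count; apply/hasP; exists (map (addn k) (staircase m)).
  rewrite mem_prefixes ?leq_addr // map_inj_uniq ?u1 /=; last exact: addnI.
  rewrite size_map s1 eqxx /=; apply/allP => _ /mapP[x xm ->].
  by have := allP a1 _ xm; lia.
apply/andP; split; first (apply/andP; split).
- apply/allP => j; rewrite mem_iota => hj.
  have a2 : j < m by lia.
  have a3 : j.-1 < m by lia.
  rewrite /descent !(nth_map 0) ?s1 // ltn_add2l.
  by have := d1 j (_ : 0 < j < m); rewrite /descent => ->; lia.
- apply/hasP; exists 0; first by rewrite mem_iota (nth_map 0) ?s1; lia.
  by apply/mapP => [[x _]]; lia.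
- apply: large_letters_intro => u hu; apply/mapP/idP => [[x xm eu]|].
    by rewrite eu mem_iota; have := allP a1 _ xm; lia.
  rewrite mem_iota => hu2; exists (u - k); last by lia.
  by rewrite values mem_iota; lia.
Qed.

Lemma d_expansion n : m < n -> d I n = \sum_(k < m.+1) a I k * 'C(n - m, k).
Proof.
move=> hn.
rewrite /d (@card_perm_words _ _ desI); last by move=> s; rewrite DesEq_word.
rewrite (count_perm_words_prefixes hn) //.
rewrite (@eq_in_count _ _ desI_prefix); last first.
  by move=> p; rewrite mem_prefixes ?(ltnW hn) // => /and3P[up /eqP sp ap]; rewrite desI_cat_compl.
rewrite (count_by_large_letters _ hn) big_seq.
rewrite (eq_bigr (fun L => if size L <= m then a_prefix (size L) else 0)); last first.
  by move=> L; rewrite mem_subseqs => sL; rewrite count_large_letters.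
rewrite -big_seq sum_subseqs_by_size size_iota; apply: eq_bigr => k _.
by rewrite a_eq_prefix.
Qed.

End DescentClass.

Lemma maxI_mem (I : seq nat) : I != [::] -> maxI I \in I.
Proof.
rewrite /maxI; elim: I => // x s IH _; rewrite big_cons.
case: s IH => [|y s] IH; first by rewrite big_nil maxn0 mem_head.
have := IH isT; set M := \max_(i <- _) i => hM.
rewrite /maxn; case: ltnP => _; first by rewrite inE hM orbT.
by rewrite mem_head.
Qed.

Theorem theorem3p3 (I : seq nat) (Ipos : all (fun i => 0 < i) I)
    (Ine : I != [::]) :
  a I 0 = 0 /\
  (forall n : nat, maxI I < n ->
     d I n = \sum_(k < (maxI I).+1) a I k * 'C(n - maxI I, k)) /\
  (forall k : nat, 1 <= k <= maxI I -> 0 < a I k).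
Proof.
have mI := maxI_mem Ine.
have I_bounded i : i \in I -> 0 < i <= maxI I.
  by move=> iI; rewrite (allP Ipos _ iI) (@leq_bigmax_seq _ I xpredT id i iI).
split; first by rewrite (a_eq_prefix mI I_bounded) a_prefix0.
split; first exact: d_expansion mI I_bounded.
by move=> k hk; rewrite (a_eq_prefix mI I_bounded) a_prefix_gt0.
Qed.
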